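(* For every integer $n\ge 0$ there is a surjective $\mathbb{R}$-algebra homomorphism $A_{\mathbb R}\to M_{n+1}(\mathbb{C})$.
   Context: $A_{\mathbb R}=\mathbb{R}\langle x_1,\dots,x_7\rangle/(r_1,\dots,r_7)$ with $r_1=[x_2,x_3]+[x_4,x_5]+[x_6,x_7]$, $r_2=[x_3,x_1]+[x_4,x_6]+[x_7,x_5]$, $r_3=[x_1,x_2]+[x_6,x_5]+[x_7,x_4]$, $r_4=[x_5,x_1]+[x_3,x_7]+[x_6,x_2]$, $r_5=[x_1,x_4]+[x_2,x_7]+[x_3,x_6]$, $r_6=[x_7,x_1]+[x_5,x_3]+[x_2,x_4]$, $r_7=[x_1,x_6]+[x_4,x_3]+[x_5,x_2]$. $M_{n+1}(\mathbb{C})$ is regarded as an $\mathbb{R}$-algebra. *)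

From HB Require Import structures.
From mathcomp Require Import all_boot all_order all_algebra.
From mathcomp Require Import complex.
From mathcomp Require Import Rstruct.
From Stdlib Require Import Reals.
Set Implicit Arguments. Unset Strict Implicit. Unset Printing Implicit Defensive.
Import Order.TTheory GRing.Theory Num.Theory.
Local Open Scope ring_scope.

Notation RR := Rdefinitions.R.
Notation CC := (complex RR).

(* The generators x_1..x_7 are indexed by 'I_7 (x_{k+1} <-> index k). *)
Definition gen (k : nat) : 'I_7 := inord k.

(* Elements of the free algebra R<x_1,...,x_7>: finite R-linear combinations
   of words (noncommutative monomials) in the generators. *)
Definition word := seq 'I_7.
Definition ncpoly := seq (RR * word).

(* The unique R-algebra homomorphism R<x_1..x_7> -> M_m(C) sending x_i to X i. *)
Definition ev_word (m : nat) (X : 'I_7 -> 'M[CC]_m.+1) (w : word) : 'M[CC]_m.+1 :=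
  \prod_(i <- w) X i.
Definition ev_nc (m : nat) (X : 'I_7 -> 'M[CC]_m.+1) (p : ncpoly) : 'M[CC]_m.+1 :=
  \sum_(t <- p) ((t.1)%:C)%C *: ev_word X t.2.

Definition comm (m : nat) (a b : 'M[CC]_m.+1) := a * b - b * a.

(* The images of the seven defining relations r_1..r_7 of A_R under x_i |-> X i
   (x_j = X (gen (j-1))). *)
Definition rels (m : nat) (X : 'I_7 -> 'M[CC]_m.+1) : seq 'M[CC]_m.+1 :=
  let x j := X (gen j.-1) in
  [:: comm (x 2) (x 3) + comm (x 4) (x 5) + comm (x 6) (x 7);
      comm (x 3) (x 1) + comm (x 4) (x 6) + comm (x 7) (x 5);
      comm (x 1) (x 2) + comm (x 6) (x 5) + comm (x 7) (x 4);
      comm (x 5) (x 1) + comm (x 3) (x 7) + comm (x 6) (x 2);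
      comm (x 1) (x 4) + comm (x 2) (x 7) + comm (x 3) (x 6);
      comm (x 7) (x 1) + comm (x 5) (x 3) + comm (x 2) (x 4);
      comm (x 1) (x 6) + comm (x 4) (x 3) + comm (x 5) (x 2)].

(* A surjective R-algebra homomorphism A_R -> M_{m+1}(C): by the universal
   property of the quotient of the free algebra, it is the same as a choice of
   images X i of the generators killing all relations, such that the induced
   map ev_nc X from the free algebra is onto. *)
Definition surj_hom_from_A (m : nat) : Prop :=
  exists X : 'I_7 -> 'M[CC]_m.+1,
    (forall r, r \in rels X -> r = 0) /\
    (forall M : 'M[CC]_m.+1, exists p : ncpoly, ev_nc X p = M).

From mathcomp Require Import all_boot all_order all_algebra.
From mathcomp Require Import complex Rstruct.
Set Implicit Arguments. Unset Strict Implicit. Unset Printing Implicit Defensive.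
Import Order.TTheory GRing.Theory Num.Theory.
Local Open Scope ring_scope.

(* Send x_1 to i, x_2 to the lower shift L, x_3 to its transpose U, x_4 to i U,
   x_5 to -i L and x_6, x_7 to 0.  Every relation then collapses to
   [L, U] + [i U, -i L] = [L, U] + [U, L] = 0 or to commutators with scalars.
   The real algebra generated by i, L and U contains 1 - L U = E_00, hence
   E_jk = L^j E_00 U^k, hence every complex matrix. *)

Lemma mulii : ('i * 'i : CC)%C = -1.
Proof.
by apply/eqP; rewrite eq_complex /= !mul0r !mulr0 mulr1 sub0r addr0 oppr0 !eqxx.
Qed.

Section Commutator.
Variable m : nat.
Implicit Types (P Q : 'M[CC]_m.+1) (a : CC).

Lemma commC P Q : comm Q P = - comm P Q.
Proof. by rewrite /comm opprB. Qed.

Lemma commxx P : comm P P = 0.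
Proof. exact: subrr. Qed.

Lemma comm0l P : comm 0 P = 0.
Proof. by rewrite /comm mul0r mulr0 subrr. Qed.

Lemma comm0r P : comm P 0 = 0.
Proof. by rewrite commC comm0l oppr0. Qed.

Lemma commZl a P Q : comm (a *: P) Q = a *: comm P Q.
Proof. by rewrite /comm scalerBr -scalerAl -scalerAr. Qed.

Lemma commZr a P Q : comm P (a *: Q) = a *: comm P Q.
Proof. by rewrite /comm scalerBr -scalerAl -scalerAr. Qed.

Lemma comm_scalar_mxl a P : comm a%:M P = 0.
Proof. by rewrite /comm -!mulmxE mul_scalar_mx mul_mx_scalar subrr. Qed.

Lemma comm_scalar_mxr a P : comm P a%:M = 0.
Proof. by rewrite commC comm_scalar_mxl oppr0. Qed.

End Commutator.

Section ShiftMatrices.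
Variable n : nat.

Definition lower_shift : 'M[CC]_n.+1 := \matrix_(a, b) (a == b.+1 :> nat)%:R.
Definition upper_shift : 'M[CC]_n.+1 := lower_shift^T.

Local Notation L := lower_shift.
Local Notation U := upper_shift.

Lemma lower_shift_delta (i i' j : 'I_n.+1) :
  i' = i.+1 :> nat -> L * delta_mx i j = delta_mx i' j.
Proof.
move=> def_i'; apply/matrixP => a b; rewrite -mulmxE !mxE (bigD1 i) //=.
rewrite big1 => [|c /negbTE neq_ci]; last by rewrite !mxE eq_sym neq_ci mulr0.
rewrite !mxE eqxx addr0 -natrM mulnb; congr (_ && _)%:R.
by rewrite -val_eqE /= def_i'.
Qed.

Lemma delta_upper_shift (i j j' : 'I_n.+1) :
  j' = j.+1 :> nat -> delta_mx i j * U = delta_mx i j'.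
Proof.
move=> def_j'; apply/matrixP => a b; rewrite -mulmxE !mxE (bigD1 j) //=.
rewrite big1 => [|c /negbTE neq_cj]; last by rewrite !mxE neq_cj andbF mul0r.
rewrite !mxE eqxx andbT addr0 -natrM mulnb; congr (_ && _)%:R.
by rewrite -val_eqE /= def_j'.
Qed.

Lemma delta00_shift : delta_mx 0 0 = 1 - L * U :> 'M[CC]_n.+1.
Proof.
apply/matrixP => a b; rewrite -mulmxE !mxE.
case: a => [[|a] lt_a] /=.
  rewrite big1 => [|c _]; last by rewrite !mxE mul0r.
  by rewrite subr0 -!val_eqE /= eq_sym.
rewrite (bigD1 (Ordinal (ltnW lt_a))) //= big1 => [|c neq_ca]; last first.
  rewrite !mxE eqSS; case: eqP => [eq_ac|]; last by rewrite mul0r.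
  by case/eqP: neq_ca; apply: val_inj.
by rewrite !mxE eqxx mul1r addr0 -!val_eqE /= eq_sym subrr.
Qed.

Section GeneratedSubalgebra.
Variable S : 'M[CC]_n.+1 -> Prop.
Hypothesis S0 : S 0.
Hypothesis S1 : S 1.
Hypothesis SD : forall P Q, S P -> S Q -> S (P + Q).
Hypothesis SM : forall P Q, S P -> S Q -> S (P * Q).
Hypothesis SZ : forall (r : RR) P, S P -> S ((r%:C)%C *: P).
Hypothesis Si : S ('i%C)%:M.
Hypothesis SL : S L.
Hypothesis SU : S U.

Lemma subalg_delta0 j : S (delta_mx 0 j).
Proof.
case: j => j; elim: j => [|j IHj] lt_j.
  rewrite (_ : Ordinal lt_j = 0); last exact: val_inj.
  rewrite delta00_shift; have -> : - (L * U) = ((-1)%:C)%C *: (L * U).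
    by rewrite rmorphN1 scaleN1r.
  by apply/SD/SZ/SM.
by rewrite -(@delta_upper_shift 0 (Ordinal (ltnW lt_j))) //; apply: SM.
Qed.

Lemma subalg_delta i j : S (delta_mx i j).
Proof.
case: i => i; elim: i => [|i IHi] lt_i.
  rewrite (_ : Ordinal lt_i = 0); [exact: subalg_delta0 | exact: val_inj].
by rewrite -(@lower_shift_delta (Ordinal (ltnW lt_i))) //; apply: SM.
Qed.

Lemma subalg_full M : S M.
Proof.
rewrite (matrix_sum_delta M).
elim/big_ind: _ => [|P Q|i _]; [exact: S0 | exact: SD |].
elim/big_ind: _ => [|P Q|j _]; [exact: S0 | exact: SD |].
rewrite [M i j]complexE scalerDl -scalerA; apply: SD; first exact/SZ/subalg_delta.
by rewrite -mul_scalar_mx mulmxE; apply: SM => //; apply/SZ/subalg_delta.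
Qed.

End GeneratedSubalgebra.

Definition shift_image (k : nat) : 'M[CC]_n.+1 :=
  match k with
  | 0 => ('i%C)%:M
  | 1 => L
  | 2 => U
  | 3 => 'i%C *: U
  | 4 => (- 'i%C) *: L
  | _ => 0
  end.

Definition shift_rep (k : 'I_7) := shift_image k.

Lemma shift_rep_inord k : (k < 7)%N -> shift_rep (inord k) = shift_image k.
Proof. by move=> lt_k; rewrite /shift_rep inordK. Qed.

Lemma shift_rep_rels r : r \in rels shift_rep -> r = 0.
Proof.
rewrite /rels /gen !inE !shift_rep_inord //=.
rewrite !(commZl, commZr, comm0l, comm0r, comm_scalar_mxl, comm_scalar_mxr, commxx).
rewrite !scaler0 !addr0 !add0r scalerA mulrN mulii opprK scale1r (commC U).
by rewrite addNr scaleNr addNr !orbb => /eqP.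
Qed.

End ShiftMatrices.

Section EvaluationImage.
Variables (m : nat) (X : 'I_7 -> 'M[CC]_m.+1).

Definition in_ev_image (M : 'M[CC]_m.+1) := exists p : ncpoly, ev_nc X p = M.

Lemma ev_word_cat w1 w2 : ev_word X (w1 ++ w2) = ev_word X w1 * ev_word X w2.
Proof. exact: big_cat. Qed.

Lemma ev_image0 : in_ev_image 0.
Proof. by exists [::]; rewrite /ev_nc big_nil. Qed.

Lemma ev_image_gen k : in_ev_image (X k).
Proof.
exists [:: (1, [:: k])].
by rewrite /ev_nc /ev_word big_seq1 /= big_seq1 rmorph1 scale1r.
Qed.

Lemma ev_image1 : in_ev_image 1.
Proof.
exists [:: (1, [::])].
by rewrite /ev_nc /ev_word big_seq1 /= big_nil rmorph1 scale1r.
Qed.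

Lemma ev_imageD P Q : in_ev_image P -> in_ev_image Q -> in_ev_image (P + Q).
Proof. by move=> [p <-] [q <-]; exists (p ++ q); rewrite /ev_nc big_cat. Qed.

Lemma ev_imageZ (r : RR) P : in_ev_image P -> in_ev_image ((r%:C)%C *: P).
Proof.
move=> [p <-]; exists [seq (r * t.1, t.2) | t <- p].
rewrite /ev_nc big_map scaler_sumr; apply: eq_bigr => t _.
by rewrite rmorphM scalerA.
Qed.

Lemma ev_imageM P Q : in_ev_image P -> in_ev_image Q -> in_ev_image (P * Q).
Proof.
move=> [p <-] [q <-].
exists [seq (s.1 * t.1, s.2 ++ t.2) | s <- p, t <- q].
rewrite /ev_nc big_allpairs_dep mulr_suml; apply: eq_bigr => s _.
rewrite mulr_sumr; apply: eq_bigr => t _.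
by rewrite ev_word_cat rmorphM -scalerAl -scalerAr scalerA.
Qed.

End EvaluationImage.

Lemma ev_image_shift_image n k :
  (k < 7)%N -> in_ev_image (@shift_rep n) (shift_image n k).
Proof. by move=> lt_k; rewrite -shift_rep_inord //; apply: ev_image_gen. Qed.

Theorem corollary6p4 : forall n : nat, surj_hom_from_A n.
Proof.
move=> n; exists (@shift_rep n); split; first exact: shift_rep_rels.
apply: (@subalg_full n (in_ev_image (@shift_rep n))).
- exact: ev_image0.
- exact: ev_image1.
- exact: ev_imageD.
- exact: ev_imageM.
- exact: ev_imageZ.
- by apply: (@ev_image_shift_image n 0).
- by apply: (@ev_image_shift_image n 1).
- by apply: (@ev_image_shift_image n 2).
Qed.
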